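(* Let $d$ be sufficiently large and let $r$ be an even integer with $4\le r\le 2^{-16}d$. For $b\in\{0,1\}$, let $(f,U)\sim\mathcal{D}_b$, and let $B_0$ be the event that $|A[i]-A[j]|\le d/4$ for some distinct $i,j\in[2^{d/64}]$. Then (1) $\Pr_{\mathcal{D}_b}[B_0]\le 2^{-d/32}$ for each $b\in\{0,1\}$; (2) conditioned on $\overline{B_0}$, if $b=0$ then $f$ is Lipschitz, and if $b=1$ then $\ell_{0,U}(f,\mathrm{Lip})\ge\tfrac12$.
   Context: On $\{0,1\}^d$, $|x-y|$ is Hamming distance, $f$ is Lipschitz if $|f(x)-f(y)|\le|x-y|$ for all $x,y$, and $\ell_{0,U}(f,\mathrm{Lip})=\min_{g\text{ Lipschitz}}\Pr_{x\sim U}[f(x)\neq g(x)]$. For $x\in\{0,1\}^d$ and $t>0$, $B(x,t)=\{y:|x-y|<t\}$ (open ball). The distribution $\mathcal{D}_b$ over pairs $(f,U)$ is sampled as follows: (1) sample a list $A$ of $2^{d/64}$ points of $\{0,1\}^d$ independently and uniformly; (2) for each $i\in[2^{d/64}]$ independently choose $A'[i]$ uniformly from $\{y:|A[i]-y|=r-b\}$; (3) define $f(x)=|x-A[i]|$ if $x\in B(A[i],r/2)$ for some $i$; else $f(x)=r-|x-A'[i]|$ if $x\in B(A'[i],r/2)$ for some $i$; else $f(x)=r/2$; (4) let $U$ be the uniform distribution over the set $A\cup A'$ of all these points. *)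

From HB Require Import structures.
From mathcomp Require Import all_boot all_order all_algebra.
From mathcomp Require Import boolp classical_sets reals exp.
Set Implicit Arguments. Unset Strict Implicit. Unset Printing Implicit Defensive.
Import Order.TTheory GRing.Theory Num.Theory.
Local Open Scope classical_set_scope.
Local Open Scope ring_scope.

Definition cube (d : nat) := {ffun 'I_d -> bool}.

Definition ham (d : nat) (x y : cube d) : nat := #|[set k | x k != y k]|.

Definition lipschitz (R : realType) (d : nat) (g : cube d -> R) : Prop :=
  forall x y : cube d, `|g x - g y| <= (ham x y)%:R.

Definition nA (d : nat) : nat := 2 ^ (d %/ 64).

Definition plist (d : nat) := {ffun 'I_(nA d) -> cube d}.

Definition sphere (d : nat) (x : cube d) (k : nat) : {set cube d} :=
  [set y | ham x y == k].

Definition in_omega (d r : nat) (b : bool) (w : plist d * plist d) : bool :=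
  [forall i, ham (w.1 i) (w.2 i) == (r - nat_of_bool b)%N].

(* Probability of an outcome (A, A') under D_b: A[i] uniform on the cube,
   independently; A'[i] uniform on the sphere of radius r-b around A[i]. *)
Definition weightD (R : realType) (d r : nat) (b : bool)
    (w : plist d * plist d) : R :=
  if in_omega r b w then
    \prod_(i < nA d) ((2 ^ d)%:R * #|sphere (w.1 i) (r - nat_of_bool b)|%:R)^-1
  else 0.

Definition PrD (R : realType) (d r : nat) (b : bool)
    (E : pred (plist d * plist d)) : R :=
  \sum_(w | E w) @weightD R d r b w.

(* The function f defined from A, A' (step (3)); ties between several balls
   are broken by [pick], i.e. an arbitrary fixed index. Open balls B(x, r/2). *)
Definition f_of (R : realType) (d r : nat) (A A' : plist d) (x : cube d) : R :=
  match [pick i | (ham x (A i))%:R < r%:R / 2 :> R] with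
  | Some i => (ham x (A i))%:R
  | None =>
    match [pick i | (ham x (A' i))%:R < r%:R / 2 :> R] with
    | Some i => r%:R - (ham x (A' i))%:R
    | None => r%:R / 2
    end
  end.

Definition suppU (d : nat) (A A' : plist d) : {set cube d} :=
  [set x | [exists i, (x == A i) || (x == A' i)]].

Definition PrU (R : realType) (d : nat) (S : {set cube d}) (P : pred (cube d)) : R :=
  #|[set x in S | P x]|%:R / #|S|%:R.

(* ell_{0,U}(f, Lip) with U uniform on S. *)
Definition ell0 (R : realType) (d : nat) (S : {set cube d}) (f : cube d -> R) : R :=
  inf ((fun g : cube d -> R => @PrU R d S [pred x | f x != g x]) @` [set g | lipschitz g]).

Definition B0 (d : nat) (A : plist d) : bool :=
  [exists i, exists j, (i != j) && (4 * ham (A i) (A j) <= d)%N].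

From HB Require Import structures.
From mathcomp Require Import all_boot all_order all_algebra.
From mathcomp Require Import boolp classical_sets reals exp zify ring lra.
Import Order.TTheory GRing.Theory Num.Theory.
Set Implicit Arguments. Unset Strict Implicit.

(* Bad event: by a union bound over pairs (i, j), and since translating A[j] by
   A[i] preserves the uniform distribution, Pr[B0] <= 2^(2d/64) V / 2^d where V
   is the volume of a Hamming ball of radius d/4.  Weighting each x by
   2^(d/4 + d - |x|) shows V 2^d <= 2^(d/4) 3^d, hence V^16 <= 2^(15d) and
   Pr[B0] <= 2^(-d/32).
   Outside B0 the centres A[i] are more than 16r apart, so a point is close to
   at most one of them.  For b = 0, f lies above the 1-Lipschitz functions
   r - |x - A'[i]| and at each point either equals one of them or lies below both
   r/2 and every |x - A[i]|, while it is always above r/2 or above some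
   |x - A[i]|; this forces f to be Lipschitz.  For b = 1, f(A[i]) = 0 and
   f(A'[i]) = r although |A[i] - A'[i]| = r - 1, so a Lipschitz g disagrees with f
   on each of the 2^(d/64) disjoint pairs, i.e. on half of the support of U. *)

Section Hamming.
Variable d : nat.
Implicit Types x y z : cube d.

(* [ham] counts a classical-set comprehension; this is the same finset cardinal. *)
Lemma hamE x y : ham x y = #|[set k | x k != y k]|.
Proof. by apply: eq_card => k; rewrite inE; apply/idP/idP => [/set_mem|/mem_set]. Qed.

Lemma ham_sym x y : ham x y = ham y x.
Proof. by rewrite !hamE; apply: eq_card => k; rewrite !inE eq_sym. Qed.

Lemma hamxx x : ham x x = 0%N.
Proof. by rewrite hamE; apply/eqP; rewrite cards_eq0; apply/eqP/setP => k; rewrite !inE eqxx. Qed.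

Lemma ham_triangle x y z : (ham x z <= ham x y + ham y z)%N.
Proof.
rewrite !hamE; apply: leq_trans (leq_card_setU _ _).
apply: subset_leq_card; apply/fintype.subsetP => k; rewrite !inE.
by case: (x k); case: (y k); case: (z k).
Qed.

Lemma ham_le x y : (ham x y <= d)%N.
Proof. by rewrite hamE; apply: leq_trans (max_card _) _; rewrite card_ord. Qed.

Definition cube0 : cube d := [ffun _ => false].

Definition cube_xor x y : cube d := [ffun k => x k != y k].

Lemma cube_xorKr x y : cube_xor x (cube_xor x y) = y.
Proof. by apply/ffunP => k; rewrite !ffunE; case: (x k); case: (y k). Qed.

Lemma ham_xor x y : ham x y = ham cube0 (cube_xor x y).
Proof. by rewrite !hamE; apply: eq_card => k; rewrite !inE !ffunE; case: (x k); case: (y k). Qed.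

Lemma exp2_ham0 x : (2 ^ (d - ham cube0 x) = \prod_k (if x k then 1 else 2))%N.
Proof.
have wt_card : ham cube0 x = #|[pred k | x k]|.
  by rewrite hamE; apply: eq_card => k; rewrite !inE ffunE; case: (x k).
have -> : (d - ham cube0 x = #|[pred k | ~~ x k]|)%N.
  have := cardC [pred k | x k]; rewrite card_ord wt_card => E.
  by rewrite -{1}E addKn; apply: eq_card.
rewrite -prod_nat_const big_mkcond /=; apply: eq_bigr => k _.
by rewrite unfold_in /=; case: (x k).
Qed.

End Hamming.

Arguments cube0 d : clear implicits.

Lemma card_ffun_coord (I T : finType) (j : I) (P : pred T) :
  #|[set A : {ffun I -> T} | P (A j)]| = (#|P| * #|T| ^ #|I|.-1)%N.
Proof.
pose G (k : I) (y : T) : nat := if k == j then nat_of_bool (P y) else 1%N.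
rewrite -sum1_card; transitivity (\sum_(A : {ffun I -> T}) \prod_k G k (A k))%N.
  rewrite big_mkcond /=; apply: eq_bigr => A _.
  rewrite (bigD1 j) //= big1 => [|k /negPf Hk]; last by rewrite /G Hk.
  by rewrite /G eqxx inE muln1; case: (P (A j)).
rewrite -(bigA_distr_bigA G) (bigD1 j) //= -(cardC1 j) -prod_nat_const.
congr (_ * _)%N; last by apply: eq_big => // k Hk; rewrite /G (negPf Hk) sum1_card.
rewrite /G eqxx -sum1_card [in RHS]big_mkcond /=; apply: eq_bigr => y _.
by rewrite unfold_in; case: (P y).
Qed.

Lemma card_cube d : #|cube d| = (2 ^ d)%N.
Proof. by rewrite card_ffun card_bool card_ord. Qed.

Definition quarter_ball d : pred (cube d) := [pred x | (4 * ham (cube0 d) x <= d)%N].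
Arguments quarter_ball d : clear implicits.

Definition xor_into d (i j : 'I_(nA d)) (A : plist d) : plist d :=
  [ffun k => if k == j then cube_xor (A i) (A j) else A k].

Lemma xor_intoK d (i j : 'I_(nA d)) : i != j -> involutive (xor_into i j).
Proof.
move=> ij A; apply/ffunP => k; rewrite !ffunE.
by case: eqP => [-> | //]; rewrite eqxx (negbTE ij) cube_xorKr.
Qed.

Lemma card_plist_close d (i j : 'I_(nA d)) : i != j ->
  #|[set A : plist d | (4 * ham (A i) (A j) <= d)%N]| =
  (#|quarter_ball d| * (2 ^ d) ^ (nA d).-1)%N.
Proof.
move=> ij; transitivity #|[set A : plist d | quarter_ball d (A j)]|; last first.
  by rewrite card_ffun_coord card_cube card_ord.
rewrite -(card_preimset _ (inv_inj (xor_intoK ij))); apply: eq_card => A.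
by rewrite !inE !ffunE eqxx (negbTE ij) ham_xor cube_xorKr.
Qed.

Lemma card_B0 d : (#|[set A : plist d | B0 A]| <=
  nA d * nA d * (#|quarter_ball d| * (2 ^ d) ^ (nA d).-1))%N.
Proof.
pose E (p : 'I_(nA d) * 'I_(nA d)) (A : plist d) := (4 * ham (A p.1) (A p.2) <= d)%N.
have union_bound :
    (#|[set A : plist d | B0 A]| <= \sum_(p | p.1 != p.2) #|[set A | E p A]|)%N.
  rewrite -sum1_card; apply: (@leq_trans
    (\sum_(A : plist d) \sum_(p | p.1 != p.2) nat_of_bool (E p A))).
    rewrite [leqRHS](bigID (mem [set A : plist d | B0 A])) /=.
    apply: leq_trans (leq_addr _ _); apply: leq_sum => A.
    rewrite inE => /existsP [i /existsP [j /andP [ij Eij]]].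
    by rewrite (bigD1 (i, j)) //= /E /= Eij leq_addr.
  rewrite exchange_big /=; apply: eq_leq; apply: eq_bigr => p _.
  rewrite -sum1_card [RHS]big_mkcond /=; apply: eq_bigr => A _.
  by rewrite inE; case: (E p A).
apply: leq_trans union_bound _.
pose c := (#|quarter_ball d| * (2 ^ d) ^ (nA d).-1)%N.
apply: (@leq_trans (\sum_(p : 'I_(nA d) * 'I_(nA d)) c)%N); last first.
  by rewrite sum_nat_const card_prod card_ord.
rewrite [leqRHS](bigID (fun p => p.1 != p.2)) /=; apply: leq_trans (leq_addr _ _).
by apply: eq_leq; apply: eq_bigr => -[i j] /= ij; exact: card_plist_close.
Qed.

(* On the ball the weight 2^(d/4) 2^(d - |x|) is at least 2^d; summed over the
   whole cube it is 2^(d/4) 3^d. *)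
Lemma quarter_ball_volume d :
  (#|quarter_ball d| * 2 ^ d <= 2 ^ (d %/ 4) * 3 ^ d)%N.
Proof.
rewrite -sum_nat_const.
apply: (@leq_trans (\sum_(x in quarter_ball d) 2 ^ (d %/ 4) * 2 ^ (d - ham (cube0 d) x))).
  apply: leq_sum => x; rewrite inE => x_in.
  have x_small : (ham (cube0 d) x <= d %/ 4)%N by move: x_in; lia.
  rewrite -expnD leq_exp2l // -{1}(subnKC (ham_le (cube0 d) x)); lia.
apply: (@leq_trans (\sum_x 2 ^ (d %/ 4) * 2 ^ (d - ham (cube0 d) x))).
  by rewrite [leqRHS](bigID (mem (quarter_ball d))) /= leq_addr.
rewrite -big_distrr leq_mul2l /=; apply/orP; right.
under eq_bigr => x _ do rewrite exp2_ham0.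
rewrite -(bigA_distr_bigA (fun (_ : 'I_d) (b : bool) => if b then 1 else 2)%N) /=.
by rewrite (eq_bigr (fun _ => 3)%N) ?prod_nat_const ?card_ord // => k _; rewrite big_bool.
Qed.

Lemma exp3_le_exp2 d : (3 ^ (16 * d) <= 2 ^ (27 * d))%N.
Proof.
have [-> // | d_gt0] := posnP d.
rewrite !expnM (leq_exp2r _ _ d_gt0).
(* 3^16 <= 2^27 through 3^8 <= 2^13, keeping the unary computation small *)
have -> : (3 ^ 16 = (3 ^ 8) ^ 2)%N by rewrite -expnM.
apply: (@leq_trans ((2 ^ 13) ^ 2)); first by rewrite leq_exp2r.
by rewrite -expnM leq_exp2l.
Qed.

Lemma quarter_ball_exp16 d : (#|quarter_ball d| ^ 16 <= 2 ^ (15 * d))%N.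
Proof.
have vol16 : ((#|quarter_ball d| * 2 ^ d) ^ 16 <= (2 ^ (d %/ 4) * 3 ^ d) ^ 16)%N.
  by rewrite leq_exp2r ?quarter_ball_volume.
rewrite !expnMn -!expnM in vol16.
have quarter : (2 ^ (d %/ 4 * 16) <= 2 ^ (4 * d))%N by rewrite leq_exp2l //; lia.
have three := exp3_le_exp2 d; rewrite mulnC in three.
rewrite -(@leq_pmul2r (2 ^ (d * 16))) ?expn_gt0 //; apply: leq_trans vol16 _.
by apply: leq_trans (leq_mul quarter three) _; rewrite -!expnD; apply: eq_leq; congr (_ ^ _)%N; lia.
Qed.

Local Open Scope ring_scope.

Lemma sum_weightD_le (R : realType) d r b (A : plist d) :
  \sum_(A' : plist d) @weightD R d r b (A, A') <= ((2 ^ d)%:R^-1) ^+ nA d.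
Proof.
set k := (r - b)%N; set N : R := (2 ^ d)%:R.
have N0 : 0 < N by rewrite ltr0n expn_gt0.
pose F i (y : cube d) : R := if ham (A i) y == k then (N * #|sphere (A i) k|%:R)^-1 else 0.
have weightE A' : weightD R r b (A, A') = \prod_i F i (A' i).
  rewrite /weightD /in_omega /=.
  case: (boolP [forall i, _]) => [/forallP on_sphere | /forallPn [i off_sphere]].
    by apply: eq_bigr => i _; rewrite /F on_sphere.
  by rewrite (bigD1 i) //= /F (negbTE off_sphere) mul0r.
rewrite (eq_bigr _ (fun A' _ => weightE A')) -(bigA_distr_bigA F) /=.
have -> : N^-1 ^+ nA d = \prod_(i < nA d) N^-1 by rewrite prodr_const card_ord.
apply: ler_prod => i _.
have -> : \sum_y F i y = #|sphere (A i) k|%:R * (N * #|sphere (A i) k|%:R)^-1.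
  transitivity (\sum_(y in sphere (A i) k) (N * #|sphere (A i) k|%:R)^-1).
    by rewrite [RHS]big_mkcond /=; apply: eq_bigr => y _; rewrite /F inE.
  by rewrite sumr_const mulr_natl.
set s : R := #|_|%:R; rewrite invfM mulrCA.
have [-> | s0] := eqVneq s 0; first by rewrite invr0 !mulr0 lexx invr_ge0 ltW.
by rewrite divff // mulr1 lexx andbT invr_ge0 ltW.
Qed.

Lemma PrD_le_card (R : realType) d r b (E : pred (plist d)) :
  @PrD R d r b (fun w => E w.1) <= #|[set A : plist d | E A]|%:R * ((2 ^ d)%:R^-1) ^+ nA d.
Proof.
have -> : PrD R r b (fun w => E w.1) =
          \sum_(A | E A) \sum_(A' : plist d) weightD R r b (A, A').
  rewrite (pair_big E xpredT (fun A A' => weightD R r b (A, A'))) /=.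
  by apply: eq_bigl => -[A A'] /=; rewrite andbT.
rewrite -sum1_card natr_sum big_distrl /=.
rewrite (eq_bigl (mem [set A : plist d | E A])) => [|A]; last by rewrite !inE.
by apply: ler_sum => A _; rewrite mul1r; apply: sum_weightD_le.
Qed.

Lemma nA_gt0 d : (0 < nA d)%N.
Proof. by rewrite expn_gt0. Qed.

Lemma PrD_B0_le (R : realType) d r b :
  @PrD R d r b (fun w => B0 w.1) <= (nA d * nA d * #|quarter_ball d|)%:R / (2 ^ d)%:R.
Proof.
set N : R := (2 ^ d)%:R; have N0 : N != 0 by rewrite pnatr_eq0 expn_eq0.
apply: le_trans (PrD_le_card R r b (@B0 d)) _.
apply: le_trans (ler_wpM2r _ (_ : _ <= (nA d * nA d *
                   (#|quarter_ball d| * (2 ^ d) ^ (nA d).-1))%:R)) _.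
- by rewrite exprn_ge0 // invr_ge0 ler0n.
- by rewrite ler_nat card_B0.
rewrite mulnA natrM natrX -/N exprVn; move: (nA d) (nA_gt0 d) => [//|m] _ /=.
rewrite exprS le_eqVlt; apply/orP; left; apply/eqP.
by field; rewrite N0 expf_neq0.
Qed.

Lemma exp32_nA2_le d V : (V ^ 16 <= 2 ^ (15 * d))%N ->
  ((nA d * nA d * V) ^ 32 * 2 ^ d <= (2 ^ d) ^ 32)%N.
Proof.
move=> V16; rewrite !expnMn /nA -!expnM -expnD.
have nA64 : (2 ^ (d %/ 64 * 32 + d %/ 64 * 32) <= 2 ^ d)%N by rewrite leq_exp2l //; lia.
have V32 : (V ^ 32 <= 2 ^ (30 * d))%N.
  rewrite (_ : 32 = 16 * 2)%N // expnM; apply: (@leq_trans ((2 ^ (15 * d)) ^ 2)).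
    by rewrite leq_exp2r.
  by rewrite -expnM; apply: eq_leq; congr (_ ^ _)%N; lia.
apply: (@leq_trans (2 ^ d * 2 ^ (30 * d) * 2 ^ d)); first by rewrite leq_mul2r leq_mul ?orbT.
by rewrite -!expnD; apply: eq_leq; congr (_ ^ _)%N; lia.
Qed.

Lemma div_exp2_le_powRN (R : realType) d C : (C ^ 32 * 2 ^ d <= (2 ^ d) ^ 32)%N ->
  C%:R / (2 ^ d)%:R <= (2 : R) `^ (- (d%:R / 32)).
Proof.
move=> C32; set N : R := (2 ^ d)%:R; have N0 : 0 < N by rewrite ltr0n expn_gt0.
set u : R := 2 `^ (d%:R / 32); have u0 : 0 < u by rewrite powR_gt0.
have uN : u ^+ 32 = N.
  by rewrite -powR_mulrn ?ltW // -powRrM mulfVK ?pnatr_eq0 // powR_mulrn // /N natrX.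
rewrite powRN -/u -(ler_pXn2r (n := 32)) //; last 2 first.
- by rewrite nnegrE divr_ge0 ?ler0n ?ltW.
- by rewrite nnegrE invr_ge0 ltW.
rewrite exprVn uN expr_div_n ler_pdivrMr ?exprn_gt0 // mulrC ler_pdivlMr //.
by rewrite /N -!natrX -natrM ler_nat.
Qed.

Section Lipschitz.
Variables (R : realType) (d : nat).
Implicit Types (x y : cube d) (g : cube d -> R).

Lemma ham_triangleR x y z : ((ham x z)%:R : R) <= (ham x y)%:R + (ham y z)%:R.
Proof. by rewrite -natrD ler_nat ham_triangle. Qed.

Lemma lipschitz_ham (a : cube d) : lipschitz (fun x => (ham x a)%:R : R).
Proof.
move=> x y; have := ham_triangleR x y a; have := ham_triangleR y x a.
by rewrite (ham_sym y x) ler_norml => h1 h2; apply/andP; split; lra.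
Qed.

Lemma lipschitz_subl (c : R) g : lipschitz g -> lipschitz (fun x => c - g x).
Proof.
by move=> g_lip x y; rewrite (_ : c - g x - (c - g y) = - (g x - g y)) ?normrN //; ring.
Qed.

Lemma lipschitz_glue (I : Type) (lo hi : I -> cube d -> R) (c : R) g :
  (forall i, lipschitz (lo i)) -> (forall i, lipschitz (hi i)) ->
  (forall x i, lo i x <= g x) ->
  (forall x, (g x <= c /\ forall i, g x <= hi i x) \/ exists i, g x = lo i x) ->
  (forall y, c <= g y \/ exists i, hi i y <= g y) ->
  lipschitz g.
Proof.
move=> lo_lip hi_lip g_ge_lo g_low g_high.
have g_sub x y : g x - g y <= (ham x y)%:R.
  have dist_ge0 := ler0n R (ham x y).
  case: (g_low x) => [[gxc gxhi] | [i ->]].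
    case: (g_high y) => [gyc | [i hiy]]; first lra.
    have := gxhi i; have := ler_norml (hi i x - hi i y) (ham x y)%:R.
    rewrite hi_lip => /esym/andP[_ ?]; lra.
  have := g_ge_lo y i; have := ler_norml (lo i x - lo i y) (ham x y)%:R.
  rewrite lo_lip => /esym/andP[_ ?]; lra.
move=> x y; rewrite ler_norml g_sub andbT lerNl opprB ham_sym; exact: g_sub.
Qed.

End Lipschitz.

Section Support.
Variables (R : realType) (d : nat) (A A' : plist d).
Hypothesis pairs_disjoint :
  forall i j, i != j -> [disjoint [set A i; A' i] & [set A j; A' j]].

Lemma card_suppU : (#|suppU A A'| <= 2 * nA d)%N.
Proof.
apply: (@leq_trans #|[set A i | i in 'I_(nA d)] :|: [set A' i | i in 'I_(nA d)]|).
  apply: subset_leq_card; apply/fintype.subsetP => x.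
  by rewrite inE => /existsP [i /orP [] /eqP ->]; rewrite inE imset_f ?orbT.
apply: leq_trans (leq_card_setU _ _) _; rewrite mul2n -addnn.
by apply: leq_add; apply: leq_trans (leq_imset_card _ _) _; rewrite card_ord.
Qed.

Lemma PrU_suppU_ge_half (P : pred (cube d)) :
  (forall i, P (A i) || P (A' i)) -> 1 / 2 <= @PrU R d (suppU A A') P.
Proof.
move=> hit; pose c i := if P (A i) then A i else A' i.
have c_pair i : c i \in [set A i; A' i] by rewrite /c !inE; case: ifP; rewrite eqxx ?orbT.
have c_inj : injective c.
  move=> i j cij; apply/eqP; apply: contraT => /pairs_disjoint/disjointFr/(_ (c_pair i)).
  by rewrite cij c_pair.
have c_hit i : c i \in [set x in suppU A A' | P x].
  rewrite !inE; apply/andP; split.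
    by apply/existsP; exists i; move: (c_pair i); rewrite !inE.
  by rewrite /c; case: ifP => // /negbT nPA; move: (hit i); rewrite (negbTE nPA).
have hits : (nA d <= #|[set x in suppU A A' | P x]|)%N.
  rewrite -{1}(card_ord (nA d)) -cardsT -(card_imset _ c_inj).
  by apply: subset_leq_card; apply/fintype.subsetP => x /imsetP [i _ ->].
have supp_gt0 : (0 < #|suppU A A'|)%N.
  apply: leq_trans (nA_gt0 d) _; apply: leq_trans hits _.
  by apply: subset_leq_card; apply/fintype.subsetP => x; rewrite inE => /andP[].
rewrite /PrU ler_pdivlMr ?ltr0n //.
have : (#|suppU A A'|%:R : R) <= 2 * (nA d)%:R by rewrite -natrM ler_nat card_suppU.
have : ((nA d)%:R : R) <= #|[set x in suppU A A' | P x]|%:R by rewrite ler_nat.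
lra.
Qed.

Lemma ell0_suppU_ge_half (f : cube d -> R) :
  (forall i, (ham (A i) (A' i))%:R < `|f (A i) - f (A' i)|) ->
  1 / 2 <= @ell0 R d (suppU A A') f.
Proof.
move=> steep; apply: lb_le_inf.
  exists (PrU R (suppU A A') [pred x | f x != 0]); exists (fun=> 0) => //.
  by move=> x y; rewrite subr0 normr0 ler0n.
move=> _ [g g_lip <-]; apply: PrU_suppU_ge_half => i /=.
apply: contraT; rewrite negb_or => /andP [/negPn/eqP fgA /negPn/eqP fgA'].
by have := g_lip (A i) (A' i); rewrite -fgA -fgA' leNgt steep.
Qed.

End Support.

Lemma ltr_nat_half (R : realType) (n r : nat) : ((n%:R : R) < r%:R / 2) = (2 * n < r)%N.
Proof. by rewrite ltr_pdivlMr // -natrM ltr_nat mulnC. Qed.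

Lemma f_of_cases (R : realType) d r (A A' : plist d) x :
  [\/ exists i, (2 * ham x (A i) < r)%N /\ @f_of R d r A A' x = (ham x (A i))%:R,
      (forall i, r <= 2 * ham x (A i))%N /\
        exists i, (2 * ham x (A' i) < r)%N /\ @f_of R d r A A' x = r%:R - (ham x (A' i))%:R
    | [/\ (forall i, r <= 2 * ham x (A i))%N, (forall i, r <= 2 * ham x (A' i))%N &
         @f_of R d r A A' x = r%:R / 2]].
Proof.
have far_from (B : plist d) : (forall i, ~~ ((ham x (B i))%:R < r%:R / 2 :> R)) ->
    forall i, (r <= 2 * ham x (B i))%N.
  by move=> not_close i; have := not_close i; rewrite ltr_nat_half -leqNgt.
rewrite /f_of; case: pickP => [i | notA].
  by rewrite ltr_nat_half => close; apply: Or31; exists i.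
have farA := far_from A (fun i => negbT (notA i)).
case: pickP => [i | notA'].
  by rewrite ltr_nat_half => close; apply: Or32; split => //; exists i.
by apply: Or33; split => //; apply: far_from => i; rewrite notA'.
Qed.

Definition far_apart d r (A : plist d) :=
  forall i j, i != j -> (16 * r < ham (A i) (A j))%N.

Lemma far_apart_notB0 d r (A : plist d) : (64 * r <= d)%N -> ~~ B0 A -> far_apart r A.
Proof.
move=> rd nB0 i j ij; rewrite ltnNge; apply: contra nB0 => close.
by apply/existsP; exists i; apply/existsP; exists j; rewrite ij /=; lia.
Qed.

Lemma far_apart_pairs_disjoint d r (A A' : plist d) :
  far_apart r A -> (forall i, ham (A i) (A' i) <= r)%N ->
  forall i j, i != j -> [disjoint [set A i; A' i] & [set A j; A' j]].
Proof.
move=> far near_pair i j ij.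
have near k x : x \in [set A k; A' k] -> (ham (A k) x <= r)%N.
  by rewrite !inE => /orP[] /eqP ->; rewrite ?hamxx ?near_pair.
rewrite disjoint_subset; apply/fintype.subsetP => x /near xi.
rewrite inE; apply/negP => /near; rewrite ham_sym => xj.
by have := ham_triangle (A i) x (A j); have := far _ _ ij; lia.
Qed.

Section FarApart.
Variables (R : realType) (d r : nat) (A A' : plist d).
Hypothesis far : far_apart r A.
Local Notation f := (@f_of R d r A A').

Lemma far_apart_sep x i j : i != j -> (16 * r < ham x (A i) + ham x (A j))%N.
Proof. by move/far; have := ham_triangle (A i) x (A j); rewrite (ham_sym (A i) x); lia. Qed.

Lemma f_of_ge (pair_r : forall i, ham (A i) (A' i) = r) x i :
  r%:R - (ham x (A' i))%:R <= f x.
Proof.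
have nearA k : (ham x (A k) <= r + ham x (A' k))%N.
  by rewrite -(pair_r k) (ham_sym x (A k)) (ham_sym x); exact: ham_triangle.
have apartA' k : (r <= ham x (A k) + ham x (A' k))%N.
  by rewrite -(pair_r k) (ham_sym x (A k)); exact: ham_triangle.
case: (f_of_cases R r A A' x) => [[j [xj ->]] | [farA [j [xj ->]]] | [_ farA' ->]].
- rewrite lerBlDr -natrD ler_nat.
  have [<- | ij] := eqVneq i j; first by have := apartA' i; lia.
  by have := far_apart_sep x ij; have := nearA i; lia.
- have [<- // | ij] := eqVneq i j.
  apply: (@le_trans _ _ 0); rewrite ?subr_le0 ?subr_ge0 ler_nat; last lia.
  by have := far_apart_sep x ij; have := nearA i; have := nearA j; lia.
- have : (r%:R : R) <= 2 * (ham x (A' i))%:R by rewrite -natrM ler_nat.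
  lra.
Qed.

Lemma f_of_lipschitz (pair_r : forall i, ham (A i) (A' i) = r) : lipschitz f.
Proof.
apply: (@lipschitz_glue R d _ (fun i x => r%:R - (ham x (A' i))%:R)
                               (fun i x => (ham x (A i))%:R) (r%:R / 2)).
- by move=> i; apply: lipschitz_subl; apply: lipschitz_ham.
- by move=> i; apply: lipschitz_ham.
- exact: f_of_ge.
- move=> x; case: (f_of_cases R r A A' x) => [[j [xj ->]] | [_ [j [_ ->]]] | [farA _ ->]].
  + left; split; first by rewrite ler_pdivlMr // -natrM ler_nat; lia.
    move=> i; rewrite ler_nat; have [-> // | ij] := eqVneq i j.
    by have := far_apart_sep x ij; lia.
  + by right; exists j.
  + by left; split => // i; rewrite ler_pdivrMr // -natrM ler_nat mulnC farA.
- move=> y; case: (f_of_cases R r A A' y) => [[j [_ ->]] | [_ [j [yj ->]]] | [_ _ ->]].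
  + by right; exists j.
  + left; have : 2 * (ham y (A' j))%:R <= (r%:R : R) by rewrite -natrM ler_nat; lia.
    lra.
  + by left.
Qed.

Lemma f_of_A (r_gt0 : (0 < r)%N) i : f (A i) = 0.
Proof.
case: (f_of_cases R r A A' (A i)) => [[j [close ->]] | [farA _] | [farA _ _]].
- have [<- | ij] := eqVneq i j; first by rewrite hamxx.
  by have := far_apart_sep (A i) ij; rewrite hamxx; lia.
- by have := farA i; rewrite hamxx; lia.
- by have := farA i; rewrite hamxx; lia.
Qed.

Lemma f_of_A' (pair_r1 : forall i, ham (A i) (A' i) = r.-1) (r_gt1 : (1 < r)%N) i :
  f (A' i) = r%:R.
Proof.
have pair_sym k : ham (A' k) (A k) = r.-1 by rewrite ham_sym.
case: (f_of_cases R r A A' (A' i)) => [[j [close _]] | [_ [j [close ->]]] | [_ farA' _]].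
- have [ij | ij] := eqVneq i j; first by move: close; rewrite -ij pair_sym; lia.
  by have := far_apart_sep (A' i) ij; rewrite pair_sym; lia.
- have [<- | ij] := eqVneq i j; first by rewrite hamxx subr0.
  have := far_apart_sep (A' i) ij; have := ham_triangle (A' i) (A' j) (A j).
  by rewrite !pair_sym; lia.
- by have := farA' i; rewrite hamxx; lia.
Qed.

End FarApart.

Theorem lemma4p5 (R : realType) :
  exists d0 : nat, forall d r : nat,
    (d0 <= d)%N -> ~~ odd r -> (4 <= r)%N -> (2 ^ 16 * r <= d)%N ->
    forall b : bool,
      @PrD R d r b (fun w => B0 w.1) <= (2 : R) `^ (- (d%:R / 32))
      /\
      (forall A A' : plist d, @in_omega d r b (A, A') -> ~~ B0 A ->
        (b = false -> @lipschitz R d (@f_of R d r A A')) /\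
        (b = true -> 1 / 2 <= @ell0 R d (suppU A A') (@f_of R d r A A'))).
Proof.
exists 0%N => d r _ _ r_ge4 rd b; split.
  apply: le_trans (PrD_B0_le R d r b) _.
  exact/div_exp2_le_powRN/exp32_nA2_le/quarter_ball_exp16.
move=> A A' in_om nB0.
have far : far_apart r A.
  apply: far_apart_notB0 nB0; apply: leq_trans rd; rewrite leq_mul2r.
  by apply/orP; right; apply: (@leq_trans (2 ^ 6)); rewrite // leq_exp2l.
have pair_dist i : ham (A i) (A' i) = (r - b)%N by apply/eqP; exact: (forallP in_om i).
split=> b_val; move: pair_dist; rewrite b_val => pair_dist.
  by apply: f_of_lipschitz far _ => i; rewrite pair_dist subn0.
apply: ell0_suppU_ge_half.
  by apply: far_apart_pairs_disjoint far _ => i; rewrite pair_dist leq_subr.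
have pair_dist1 i : ham (A i) (A' i) = r.-1 by rewrite pair_dist subn1.
move=> i; rewrite f_of_A ?f_of_A' //; try lia.
by rewrite add0r normrN ger0_norm // pair_dist1 ltr_nat; lia.
Qed.
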